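(* Let $\tilde{A}\in\mathbb{Q}^{q\times n}$, $\tilde{b}\in\mathbb{Q}^{q}$ be the constraint data of the LP relaxation $P=\{x\in\mathbb{R}^n: \tilde{A}x\ge \tilde{b}\}=\{x: Ax\ge b,\ x\ge 0,\ x_j\le 1,\ j=1,\dots,p\}$ (with $A$ an $m\times n$ matrix, $q=m+n+p$, $Q=\{1,\dots,q\}$), and let $T$ be a finite index set with matrices $D^t\in\mathbb{Q}^{r\times n}$ and vectors $d_0^t\in\mathbb{Q}^r$ for $t\in T$. Let $\bar{w}=(\bar{\alpha},\bar{\beta},\{\bar{u}^t,\bar{v}^t\}_{t\in T})$ be a basic feasible solution of the CGLP system (described in the context). Let $N=N(\bar{u}):=\{j\in Q: \bar{u}^t_j>0 \text{ for some } t\in T\}$ and let $\tilde{A}_N$ be the $|N|\times n$ submatrix of $\tilde{A}$ formed by the rows indexed by $N$. Then $\bar{w}$ is regular if and only if $\tilde{A}_N$ has full row rank, i.e. $\operatorname{rank}(\tilde{A}_N)=|N|$.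
   Context: The CGLP system consists of the variables $\alpha\in\mathbb{R}^n$, $\beta\in\mathbb{R}$, $u^t\in\mathbb{R}^q$, $v^t\in\mathbb{R}^r$ ($t\in T$, row vectors) and the constraints: $\alpha-u^t\tilde{A}-v^tD^t=0$ for all $t\in T$; $\beta-u^t\tilde{b}-v^td_0^t=0$ for all $t\in T$; $\sum_{t\in T}\sum_{i=1}^q u^t_i+\sum_{t\in T}\sum_{i=1}^r v^t_i=1$; $u^t\ge 0$, $v^t\ge 0$ for all $t\in T$. (These describe valid inequalities $\alpha x\ge\beta$ for the disjunctive set $\bigvee_{t\in T}\{x:\tilde{A}x\ge\tilde{b},\ D^tx\ge d_0^t\}$.) Note that the rows of $\tilde{A}$ include the $n$ rows of the identity matrix $I_n$ (from $x\ge 0$). A feasible basic solution $(\alpha,\beta,\{u^t,v^t\}_{t\in T})$ of this system is called regular if there exists a set $J\subseteq Q$ with $|J|=n$ such that the $n\times n$ submatrix $\tilde{A}_J$ (rows indexed by $J$) is nonsingular and $u^t_j=0$ for all $j\notin J$ and all $t\in T$; otherwise it is called irregular. *)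

From HB Require Import structures.
From mathcomp Require Import all_boot all_order all_algebra.
Set Implicit Arguments. Unset Strict Implicit. Unset Printing Implicit Defensive.
Import Order.TTheory GRing.Theory Num.Theory.
Local Open Scope ring_scope.

(* Rows encoding x_j <= 1 (j < p) as -x_j >= -1. *)
Definition upper_rows (p n : nat) : 'M[rat]_(p, n) :=
  \matrix_(i < p, j < n) - ((nat_of_ord i == nat_of_ord j)%:R).

Definition Atil (m n p : nat) (A : 'M[rat]_(m, n)) : 'M[rat]_(m + (n + p), n) :=
  col_mx A (col_mx 1%:M (upper_rows p n)).

Definition btil (m n p : nat) (b : 'cV[rat]_m) : 'cV[rat]_(m + (n + p)) :=
  col_mx b (col_mx 0 (const_mx (-1))).

Definition cglp_eqs (T : finType) (n q r : nat)
  (At : 'M[rat]_(q, n)) (bt : 'cV[rat]_q)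
  (D : T -> 'M[rat]_(r, n)) (d0 : T -> 'cV[rat]_r)
  (alpha : 'rV[rat]_n) (beta : rat) (u : T -> 'rV[rat]_q) (v : T -> 'rV[rat]_r) : Prop :=
  (forall t, alpha - u t *m At - v t *m D t = 0) /\
  (forall t, beta - (u t *m bt) 0 0 - (v t *m d0 t) 0 0 = 0) /\
  (\sum_(t : T) \sum_(i < q) u t 0 i + \sum_(t : T) \sum_(i < r) v t 0 i = 1).

Definition cglp_feasible (T : finType) (n q r : nat)
  (At : 'M[rat]_(q, n)) (bt : 'cV[rat]_q)
  (D : T -> 'M[rat]_(r, n)) (d0 : T -> 'cV[rat]_r)
  (alpha : 'rV[rat]_n) (beta : rat) (u : T -> 'rV[rat]_q) (v : T -> 'rV[rat]_r) : Prop :=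
  cglp_eqs At bt D d0 alpha beta u v /\
  (forall t i, 0 <= u t 0 i) /\ (forall t i, 0 <= v t 0 i).

(* Basic feasible solution: feasible, and the unique solution of the linear
   system formed by all equality constraints together with all nonnegativity
   constraints active (tight) at the point. *)
Definition cglp_basic_feasible (T : finType) (n q r : nat)
  (At : 'M[rat]_(q, n)) (bt : 'cV[rat]_q)
  (D : T -> 'M[rat]_(r, n)) (d0 : T -> 'cV[rat]_r)
  (alpha : 'rV[rat]_n) (beta : rat) (u : T -> 'rV[rat]_q) (v : T -> 'rV[rat]_r) : Prop :=
  cglp_feasible At bt D d0 alpha beta u v /\
  forall alpha' beta' (u' : T -> 'rV[rat]_q) (v' : T -> 'rV[rat]_r),
    cglp_eqs At bt D d0 alpha' beta' u' v' ->
    (forall t i, u t 0 i = 0 -> u' t 0 i = 0) ->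
    (forall t i, v t 0 i = 0 -> v' t 0 i = 0) ->
    [/\ alpha' = alpha, beta' = beta, u' = u & v' = v].

Definition subrows (q n : nat) (J : {set 'I_q}) (M : 'M[rat]_(q, n)) : 'M[rat]_(#|J|, n) :=
  \matrix_(i < #|J|) row (enum_val i) M.

Definition cglp_regular (T : finType) (n q r : nat) (At : 'M[rat]_(q, n))
  (u : T -> 'rV[rat]_q) : Prop :=
  exists J : {set 'I_q}, exists e : #|J| = n,
    castmx (e, erefl n) (subrows J At) \in unitmx /\
    (forall j, j \notin J -> forall t, u t 0 j = 0).

Definition Nsupp (T : finType) (q : nat) (u : T -> 'rV[rat]_q) : {set 'I_q} :=
  [set j | [exists t, 0 < u t 0 j]].

(* As u >= 0, "u^t_j = 0 for j outside J" says exactly that N is contained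
   in J, so regularity asks for n rows of Atil containing the rows of N and
   forming a nonsingular matrix. If such J exists, the rows of Atil_N are among
   them and hence independent. Conversely, Atil contains the identity rows, so
   it has rank n and any independent set of its rows extends to n independent
   rows. *)
From mathcomp Require Import all_boot all_order all_algebra.
Set Implicit Arguments. Unset Strict Implicit. Unset Printing Implicit Defensive.
Import Order.TTheory GRing.Theory Num.Theory.
Local Open Scope ring_scope.

Section Subrows.
Variables (q n : nat) (M : 'M[rat]_(q, n)).
Implicit Types (S J : {set 'I_q}) (c : 'rV[rat]_q).

Definition rowsel (S : {set 'I_q}) : 'M[rat]_(#|S|, q) :=
  \matrix_(i < #|S|) delta_mx 0 (enum_val i).

Definition supported (S : {set 'I_q}) (c : 'rV[rat]_q) :=
  forall j, j \notin S -> c 0 j = 0.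

Lemma subrowsE S : subrows S M = rowsel S *m M.
Proof. by apply/row_matrixP => i; rewrite row_mul !rowK -rowE. Qed.

Lemma mul_rowsel_val S (w : 'rV_#|S|) i : (w *m rowsel S) 0 (enum_val i) = w 0 i.
Proof.
rewrite mxE (bigD1 i) //= big1 => [|k nki]; rewrite !mxE eqxx ?(inj_eq enum_val_inj).
  by rewrite eqxx mulr1 addr0.
by rewrite eq_sym (negbTE nki) mulr0.
Qed.

Lemma mul_rowsel_supported S (w : 'rV_#|S|) : supported S (w *m rowsel S).
Proof.
move=> j jS; rewrite mxE big1 // => k _; rewrite !mxE /=.
by case: eqVneq jS => [-> | _]; rewrite ?mulr0 // enum_valP.
Qed.

Lemma supported_rowsel S c :
  supported S c -> c = (\row_i c 0 (enum_val i)) *m rowsel S.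
Proof.
move=> cS; apply/rowP => j; case: (boolP (j \in S)) => [jS | jNS].
  by rewrite -(enum_rankK_in jS jS) mul_rowsel_val mxE.
by rewrite cS // mul_rowsel_supported.
Qed.

Lemma row_free_subrowsP S : row_free (subrows S M) <->
  (forall c, supported S c -> c *m M = 0 -> c = 0).
Proof.
rewrite subrowsE; split=> [free c cS cM0 | kerS].
  move: cM0; rewrite (supported_rowsel cS) -mulmxA -(mul0mx _ (rowsel S *m M)).
  by move/(row_free_inj free) ->; rewrite mul0mx.
apply: inj_row_free => w; rewrite mulmxA => /(kerS _ (mul_rowsel_supported w)) w0.
by apply/rowP => i; rewrite -mul_rowsel_val w0 !mxE.
Qed.

Lemma row_free_subrowsS S J :
  S \subset J -> row_free (subrows J M) -> row_free (subrows S M).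
Proof.
move=> sSJ /row_free_subrowsP freeJ; apply/row_free_subrowsP => c cS.
by apply: freeJ => j jNJ; apply: cS; apply: contra jNJ; apply: (subsetP sSJ).
Qed.

Lemma supported_submx J c : supported J c -> (c *m M <= subrows J M)%MS.
Proof. by move/supported_rowsel->; rewrite subrowsE -mulmxA submxMl. Qed.

Lemma row_subrows J j : j \in J -> (row j M <= subrows J M)%MS.
Proof.
move=> jJ; rewrite rowE supported_submx // => k kNJ.
by rewrite mxE /=; case: eqVneq kNJ => [-> | //]; rewrite jJ.
Qed.

Lemma row_free_subrowsU1 J j : row_free (subrows J M) ->
  ~~ (row j M <= subrows J M)%MS -> row_free (subrows (j |: J) M).
Proof.
move=> /row_free_subrowsP freeJ jNspan; apply/row_free_subrowsP => c cjJ cM0.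
pose c' := c - c 0 j *: delta_mx 0 j.
have c'J : supported J c'.
  move=> k kNJ; rewrite !mxE eqxx /=; case: (eqVneq k j) => [-> | nkj].
    by rewrite mulr1 subrr.
  by rewrite cjJ ?mulr0 ?subrr // in_setU1 negb_or nkj.
have cM : c *m M = c' *m M + c 0 j *: row j M.
  by rewrite /c' mulmxBl -scalemxAl -rowE subrK.
have cj0 : c 0 j = 0.
  apply: contraNeq jNspan => cj_neq0.
  have -> : row j M = - (c 0 j)^-1 *: (c' *m M).
    apply: (scalerI cj_neq0); rewrite scalerA mulrN mulfV // scaleN1r.
    by apply/eqP; rewrite -addr_eq0 addrC -cM cM0.
  exact/scalemx_sub/supported_submx.
have : c' = 0 by apply: freeJ; rewrite // -cM0 cM cj0 scale0r addr0.
by rewrite /c' cj0 scale0r subr0.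
Qed.

(* A maximal row-free J containing S has n rows: otherwise a row of M outside
   the span of its rows would enlarge it. *)
Lemma row_free_subrows_ext S : row_full M -> row_free (subrows S M) ->
  exists2 J : {set 'I_q}, S \subset J & row_free (subrows J M) /\ #|J| = n.
Proof.
move=> fullM freeS.
pose P J := row_free (subrows J M) && (S \subset J).
have PS : P S by rewrite /P freeS subxx.
case: (arg_maxnP (fun J => #|J|) PS) => J /andP[freeJ sSJ] maxJ.
have rankJ : \rank (subrows J M) = #|J| := eqP freeJ.
exists J => //; split=> //; apply/eqP; rewrite eqn_leq -{1}rankJ rank_leq_col /=.
rewrite leqNgt; apply/negP => ltJ.
have /row_subPn[j jNspan] : ~~ (M <= subrows J M)%MS.
  by apply: contraL ltJ => /mxrankS; rewrite (eqP fullM) rankJ leqNgt.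
have jNJ : j \notin J by apply: contra jNspan; apply: row_subrows.
have PjJ : P (j |: J).
  by rewrite /P row_free_subrowsU1 // (subset_trans sSJ) ?subsetUr.
by have := maxJ _ PjJ; rewrite cardsU1 jNJ /= add1n ltnn.
Qed.

End Subrows.

Lemma unitmx_castmx k n (e : k = n) (X : 'M[rat]_(k, n)) :
  (castmx (e, erefl n) X \in unitmx) = row_free X.
Proof. by rewrite -row_free_unit row_free_castmx. Qed.

Lemma row_full_Atil m n p (A : 'M[rat]_(m, n)) : row_full (Atil p A).
Proof.
rewrite -sub1mx /Atil -addsmxE (submx_trans _ (addsmxSr _ _)) //.
by rewrite -addsmxE addsmxSl.
Qed.

Lemma Nsupp_subsetP (T : finType) q (u : T -> 'rV[rat]_q) (J : {set 'I_q}) :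
  (forall t j, 0 <= u t 0 j) ->
  reflect (forall j, j \notin J -> forall t, u t 0 j = 0) (Nsupp u \subset J).
Proof.
move=> u_ge0; apply: (iffP subsetP) => [sNJ j jNJ t | offJ j].
  apply/eqP; rewrite eq_le u_ge0 andbT leNgt; apply: contra jNJ => ujt.
  by apply: sNJ; rewrite inE; apply/existsP; exists t.
by rewrite inE => /existsP[t]; apply: contraLR => /offJ ->; rewrite ltxx.
Qed.

Theorem theorem3 (m n p r : nat) (hp : (p <= n)%N) (T : finType)
  (A : 'M[rat]_(m, n)) (b : 'cV[rat]_m)
  (D : T -> 'M[rat]_(r, n)) (d0 : T -> 'cV[rat]_r)
  (alpha : 'rV[rat]_n) (beta : rat)
  (u : T -> 'rV[rat]_(m + (n + p))) (v : T -> 'rV[rat]_r) :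
  cglp_basic_feasible (Atil p A) (btil n p b) D d0 alpha beta u v ->
  (cglp_regular r (Atil p A) u <->
   \rank (subrows (Nsupp u) (Atil p A)) = #|Nsupp u|).
Proof.
move=> [[_ [u_ge0 _]] _]; split.
  move=> [J [e [unitJ /(Nsupp_subsetP _ u_ge0) sNJ]]]; apply/eqP.
  by apply: row_free_subrowsS sNJ _; rewrite -(unitmx_castmx e).
move/eqP/(row_free_subrows_ext (row_full_Atil p A)) => [J sNJ [freeJ e]].
exists J, e; split; first by rewrite unitmx_castmx.
exact/(Nsupp_subsetP _ u_ge0).
Qed.
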